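(* In the multi-authority model described in the context (under the standing assumptions stated there), all authorities using their privately optimal adaptive priority mechanisms $\{A^*_c\}$, $A^*_{m,c}(y_m,s)=h^{-1}(h(s)+u_{m,c}'(y_m))$, is not necessarily efficient: there exists an economy in which the resulting matching (each authority admitting, from the agents who demand it, the set selected by $A^*_c$) does not maximize total authority utility $\sum_{c\in\bar{\mathcal C}}\xi_c$ among matchings, so the mechanism selecting this outcome is not efficient.
   Context: Authorities $\mathcal C=\{c_0,\dots\}$ with dummy $c_0$ (unmatched), $\bar{\mathcal C}=\mathcal C\setminus\{c_0\}$, capacities $q_c$; agents have types $\theta=(s,m,\succ)$ with scores, group $m\in\mathcal M$ (finite) and strict preferences over $\mathcal C$; a state $\omega$ specifies the type measure. Authority $c\in\bar{\mathcal C}$ has utility $\xi_c(\bar s_{h_c},x_c)=g_c(\bar s_{h_c}+\sum_mu_{m,c}(x_{m,c}))$ over its admitted set ($\bar s_{h_c}$ integral of $h_c(\text{score})$ over admitted agents, $x_{m,c}$ admitted measure of group $m$). Standing assumptions in this setting: scores are common across authorities ($s_c(\theta)=s_{c'}(\theta)$), $h_c=h$ continuous strictly increasing, $g_c$ is the identity, $u_{m,c}$ strictly concave and differentiable with $\lim_{x\to0^+}u_{m,c}'(x)=\infty$, and every type ranks $c_0$ below every $c\in\bar{\mathcal C}$. A mechanism maps each state to a matching; its total authority value under beliefs $\Lambda$ over states is $\Xi_T(\phi,\Lambda)=\sum_{c\in\bar{\mathcal C}}\int\xi_c(\phi(\omega))d\Lambda(\omega)$; $\phi^*$ is efficient if $\Xi_T(\phi^*,\Lambda)=\sup_\phi\Xi_T(\phi,\Lambda)$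 for all $\Lambda$. When every authority uses $A^*_c$ (admits the set $\mu$ such that an applicant $\theta$ is admitted iff for all non-admitted applicants $\theta'$, $A^*_{m(\theta),c}(x_{m(\theta)},s(\theta))>A^*_{m(\theta'),c}(x_{m(\theta')},s(\theta'))$, with admitted measure equal to capacity), the outcome is the unique stable matching. *)

From HB Require Import structures.
From mathcomp Require Import all_boot all_order all_algebra.
From mathcomp Require Import all_classical all_reals all_analysis.
Unset Printing Implicit Defensive.
Import Order.TTheory GRing.Theory Num.Theory.
Import numFieldNormedType.Exports.
Local Open Scope classical_set_scope.
Local Open Scope ring_scope.

Definition strictly_concave_nonneg {R : realType} (f : R -> R) : Prop :=
  forall x y t : R, 0 <= x -> 0 <= y -> x != y -> 0 < t -> t < 1 ->
    t * f x + (1 - t) * f y < f (t * x + (1 - t) * y).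

(* An economy (one state omega) of the multi-authority model, under the
   standing assumptions: common scores, g_c = identity, h continuous strictly
   increasing (here moreover a bijection R -> R, with inverse hinv, so that
   A*_{m,c} = hinv (h s + u'(y)) is defined), u_{m,c} strictly concave,
   differentiable, Inada at 0+, every agent ranks c0 last. Agents form an
   abstract measure space; their types (s, m, >) are given by
   score/group/rank, and rank t is an injective ranking of authorities
   (smaller = preferred), i.e. a strict preference. *)
Record economy (R : realType) := Economy {
  disp : measure_display;
  agent : measurableType disp;
  omega : {finite_measure set agent -> \bar R};
  auth : finType;
  c0 : auth;
  grp : finType;
  cap : auth -> R;
  score : agent -> R;
  group : agent -> grp;
  rank : agent -> auth -> nat;
  h : R -> R;
  hinv : R -> R;
  u : grp -> auth -> R -> R;
  cap_ge0 : forall c, 0 <= cap c;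
  score_meas : measurable_fun setT score;
  group_meas : forall m, measurable (group @^-1` [set m]);
  rank_meas : forall c c', measurable [set t | (rank t c < rank t c')%N];
  rank_inj : forall t, injective (rank t);
  c0_worst : forall t c, c != c0 -> (rank t c < rank t c0)%N;
  h_cont : continuous h;
  h_incr : {mono h : x y / x < y};
  hK : cancel h hinv;
  hinvK : cancel hinv h;
  hs_int : omega.-integrable setT (fun t => (h (score t))%:E);
  u_concave : forall m c, strictly_concave_nonneg (u m c);
  u_diff : forall m c x, 0 < x -> derivable (u m c) x 1;
  u_inada : forall m c, derive1 (u m c) x @[x --> 0^'+] --> +oo
}.

Arguments disp {R} e.
Arguments agent {R} e.
Arguments omega {R} e.
Arguments auth {R} e.
Arguments c0 {R} e.
Arguments grp {R} e.
Arguments cap {R} e.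
Arguments score {R} e.
Arguments group {R} e.
Arguments rank {R} e.
Arguments h {R} e.
Arguments hinv {R} e.
Arguments u {R} e.
Arguments cap_ge0 {R} e.
Arguments score_meas {R} e.
Arguments group_meas {R} e.
Arguments rank_meas {R} e.
Arguments rank_inj {R} e.
Arguments c0_worst {R} e.
Arguments h_cont {R} e.
Arguments h_incr {R} e.
Arguments hK {R} e.
Arguments hinvK {R} e.
Arguments hs_int {R} e.
Arguments u_concave {R} e.
Arguments u_diff {R} e.
Arguments u_inada {R} e.

Set Implicit Arguments. Unset Strict Implicit.

Section Model.
Variables (R : realType) (E : economy R).

(* a matching assigns each agent an authority (c0 = unmatched) *)
Definition admitted (mu : agent E -> auth E) (c : auth E) : set (agent E) :=
  mu @^-1` [set c].

Definition is_matching (mu : agent E -> auth E) : Prop :=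
  (forall c, measurable (admitted mu c)) /\
  (forall c, c != c0 E -> (omega E (admitted mu c) <= (cap E c)%:E)%E).

Definition xmeas (mu : agent E -> auth E) (m : grp E) (c : auth E) : R :=
  fine (omega E (admitted mu c `&` group E @^-1` [set m])).

Definition sbar (mu : agent E -> auth E) (c : auth E) : R :=
  fine (\int[omega E]_(t in admitted mu c) (h E (score E t))%:E).

Definition xi (mu : agent E -> auth E) (c : auth E) : R :=
  sbar mu c + \sum_(m : grp E) u E m c (xmeas mu m c).

Definition total_value (mu : agent E -> auth E) : R :=
  \sum_(c : auth E | c != c0 E) xi mu c.

(* A*_{m,c}(y, s) = h^{-1}(h(s) + u'_{m,c}(y)); equal to +oo at y = 0
   (since u'(0+) = +oo and hinv is unbounded). *)
Definition Astar (m : grp E) (c : auth E) (y s : R) : \bar R :=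
  if 0 < y then (hinv E (h E s + derive1 (u E m c) y))%:E else +oo%E.

Definition prio (mu : agent E -> auth E) (c : auth E) (t : agent E) : \bar R :=
  Astar (group E t) c (xmeas mu (group E t) c) (score E t).

Definition demand (mu : agent E -> auth E) (c : auth E) : set (agent E) :=
  [set t | (rank E t c <= rank E t (mu t))%N].

Definition Astar_choice (mu : agent E -> auth E) (c : auth E) : Prop :=
  (forall t, demand mu c t ->
     (mu t = c <-> forall t', demand mu c t' -> mu t' != c ->
                    (prio mu c t' < prio mu c t)%E)) /\
  omega E (admitted mu c) = mine (cap E c)%:E (omega E (demand mu c)).

Definition Astar_outcome (mu : agent E -> auth E) : Prop :=
  is_matching mu /\ forall c, c != c0 E -> Astar_choice mu c.

End Model.

From HB Require Import structures.
From mathcomp Require Import all_boot all_order all_algebra.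
From mathcomp Require Import all_classical all_reals all_analysis.
From mathcomp Require Import ring lra.
Import Order.TTheory GRing.Theory Num.Theory.
Import numFieldNormedType.Exports.
Local Open Scope ring_scope.
Local Open Scope classical_set_scope.

(* Authorities' values need not follow agents' preferences.  A single agent
   of mass 1 prefers c1 to c2; both have capacity 1 and utilities
   u_c(x) = k_c sqrt x with k_c1 = 1 < 2 = k_c2.  Every A*-outcome sends the
   agent to its favourite c1 (total value 1), while the matching sending it
   to c2 has total value 2. *)

Section Counterexample.
Variable R : realType.

Definition scaled_sqrt (k x : R) : R := k * Num.sqrt x.

Lemma sqrt_strictly_concave : strictly_concave_nonneg (@Num.sqrt R).
Proof.
move=> x y t x_ge0 y_ge0 xy t_gt0 t_lt1.
set a := Num.sqrt x; set b := Num.sqrt y.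
have xE : x = a ^+ 2 by rewrite sqr_sqrtr.
have yE : y = b ^+ 2 by rewrite sqr_sqrtr.
have ab : a != b by apply: contra xy => /eqP ab; rewrite xE yE ab.
have mean_ge0 : 0 <= t * a + (1 - t) * b.
  by rewrite addr_ge0 // mulr_ge0 ?sqrtr_ge0 ?subr_ge0 ?ltW.
have sq_mean_lt : (t * a + (1 - t) * b) ^+ 2 < t * x + (1 - t) * y.
  rewrite xE yE -subr_gt0.
  have -> : t * a ^+ 2 + (1 - t) * b ^+ 2 - (t * a + (1 - t) * b) ^+ 2
           = t * (1 - t) * (a - b) ^+ 2 by ring.
  apply: mulr_gt0; first by rewrite mulr_gt0 ?subr_gt0.
  by rewrite lt_neqAle sqr_ge0 andbT eq_sym sqrf_eq0 subr_eq0.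
have sum_gt0 : 0 < t * x + (1 - t) * y.
  by apply: le_lt_trans sq_mean_lt; exact: sqr_ge0.
by rewrite -[X in X < _]ger0_norm // -sqrtr_sqr ltr_sqrt.
Qed.

Lemma scale_strictly_concave (k : R) (f : R -> R) : 0 < k ->
  strictly_concave_nonneg f -> strictly_concave_nonneg (fun x => k * f x).
Proof.
move=> k_gt0 f_conc x y t x_ge0 y_ge0 xy t_gt0 t_lt1.
have := f_conc x y t x_ge0 y_ge0 xy t_gt0 t_lt1.
rewrite -(ltr_pM2l k_gt0) mulrDr !mulrA.
by rewrite ![k * t]mulrC ![k * (1 - t)]mulrC -!mulrA.
Qed.

Lemma scaled_sqrt_strictly_concave (k : R) : 0 < k ->
  strictly_concave_nonneg (scaled_sqrt k).
Proof. by move=> k_gt0; apply: scale_strictly_concave sqrt_strictly_concave. Qed.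

Lemma is_derive_scaled_sqrt (k x : R) : 0 < x ->
  is_derive x 1 (scaled_sqrt k) (k * (2 * Num.sqrt x)^-1).
Proof. by move=> x_gt0; apply: is_deriveZ; apply: is_derive1_sqrt. Qed.

Lemma derivable_scaled_sqrt (k x : R) : 0 < x -> derivable (scaled_sqrt k) x 1.
Proof. by move=> x_gt0; apply: ex_derive; apply: is_derive_scaled_sqrt. Qed.

Lemma derive1_scaled_sqrt (k x : R) : 0 < x ->
  derive1 (scaled_sqrt k) x = k / (2 * Num.sqrt x).
Proof. by move=> /(is_derive_scaled_sqrt k) ?; rewrite derive1E derive_val. Qed.

Lemma scaled_sqrt_inada (k : R) : 0 < k ->
  derive1 (scaled_sqrt k) x @[x --> 0^'+] --> +oo.
Proof.
move=> k_gt0; apply/cvgryPgey; near=> A.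
have A_gt0 : 0 < A by near: A; exact: nbhs_pinfty_gt.
have bound_gt0 : 0 < (k / (2 * A)) ^+ 2 by rewrite exprn_gt0 // divr_gt0 ?mulr_gt0.
near=> x.
have x_gt0 : 0 < x by near: x; exact: nbhs_right_gt.
have x_lt : x < (k / (2 * A)) ^+ 2 by near: x; exact: nbhs_right_lt.
have sqrt_lt : Num.sqrt x < k / (2 * A).
  by rewrite -(ltr_sqrt _ bound_gt0) sqrtr_sqr gtr0_norm ?divr_gt0 ?mulr_gt0 in x_lt.
rewrite derive1_scaled_sqrt // ler_pdivlMr ?mulr_gt0 ?sqrtr_gt0 //.
rewrite ltr_pdivlMr ?mulr_gt0 // in sqrt_lt.
lra.
Unshelve. all: by end_near.
Qed.

Definition c1 : 'I_3 := @Ordinal 3 1 isT.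
Definition c2 : 'I_3 := @Ordinal 3 2 isT.

Definition weight (c : 'I_3) : R := if c == c2 then 2 else 1.

Lemma weight_gt0 c : 0 < weight c.
Proof. by rewrite /weight; case: ifP. Qed.

Definition pref_rank (t : unit) (c : 'I_3) : nat := if c == ord0 then 3%N else c.

Lemma pref_rank_inj t : injective (pref_rank t).
Proof. by move=> [[|[|[|?]]] ?] [[|[|[|?]]] ?] //= _; apply: val_inj. Qed.

Lemma pref_rank_c0_worst t c : c != ord0 -> (pref_rank t c < pref_rank t ord0)%N.
Proof. by move=> /negbTE c_neq0; rewrite /pref_rank c_neq0 eqxx ltn_ord. Qed.

Lemma pref_rank_gt0 t c : (0 < pref_rank t c)%N.
Proof.
by rewrite /pref_rank; case: eqP => // /eqP; rewrite -(inj_eq val_inj) /= lt0n.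
Qed.

Lemma id_continuous : continuous (@id R).
Proof. by move=> x; exact: cvg_id. Qed.

(* One agent of score 0 (so every sbar vanishes), h = id, all capacities 1. *)
Definition example : economy R :=
  @Economy R _ unit [the {finite_measure set unit -> \bar R} of @dirac _ unit tt R]
    ('I_3 : finType) ord0 unit (fun _ => 1) (fun _ => 0) (fun _ => tt) pref_rank
    id id (fun _ c => scaled_sqrt (weight c))
    (fun _ => ler01) (measurable_cst _) (fun _ => I) (fun _ _ => I)
    pref_rank_inj pref_rank_c0_worst id_continuous (fun _ _ => erefl)
    (fun _ => erefl) (fun _ => erefl)
    (finite_measure_integrable_cst _ _ measurableT)
    (fun _ c => scaled_sqrt_strictly_concave (weight c) (weight_gt0 c))
    (fun _ c x => derivable_scaled_sqrt (weight c) x)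
    (fun _ c => scaled_sqrt_inada (weight c) (weight_gt0 c)).

Implicit Types mu : unit -> 'I_3.

Lemma xmeas_example mu m c : xmeas (E:=example) mu m c = (mu tt == c)%:R.
Proof.
rewrite /xmeas /= indicE; case: eqP => [mu_c|mu_c].
  by rewrite mem_set //; split => //; case: m.
by rewrite memNset // => -[].
Qed.

Lemma xi_example mu c :
  xi (E:=example) mu c = scaled_sqrt (weight c) (mu tt == c)%:R.
Proof.
rewrite /xi /sbar /= integral0_eq //= add0r.
by rewrite (big_pred1 tt) ?xmeas_example // => -[].
Qed.

Lemma total_value_example mu : total_value (E:=example) mu =
  scaled_sqrt (weight c1) (mu tt == c1)%:R + scaled_sqrt (weight c2) (mu tt == c2)%:R.
Proof.
rewrite /total_value big_mkcond !big_ord_recl big_ord0 /= !xi_example add0r addr0.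
have -> : lift ord0 ord0 = c1 by apply: val_inj.
by have -> : lift ord0 (lift ord0 ord0) = c2 by apply: val_inj.
Qed.

Lemma is_matching_example mu : is_matching (E:=example) mu.
Proof.
split=> // c _; rewrite /= diracE lee_fin.
by case: (_ \in _); rewrite ?lexx ?ler01.
Qed.

Lemma Astar_outcome_const_c1 : Astar_outcome (E:=example) (fun _ => c1).
Proof.
split; first exact: is_matching_example.
move=> [[|[|[|?]]] ?] //= _.
- rewrite (_ : Ordinal _ = c1); last exact: val_inj.
  split; first by move=> t _; split=> // _ t' _; rewrite eqxx.
  by rewrite /= !diracE !mem_set //= minxx.
- split; first by move=> t; rewrite /demand /= /pref_rank /=.
  rewrite /= !diracE !memNset.
  + by rewrite mulr0n min_r // lee_fin ler01.
  + by rewrite /demand /=.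
  + by move=> /(congr1 val).
Qed.

(* c1 is demanded by the agent whatever the matching, so the capacity
   equation of A*_{c1} forces it to be filled. *)
Lemma Astar_outcome_agent_c1 mu : Astar_outcome (E:=example) mu -> mu tt = c1.
Proof.
move=> [_ /(_ c1 isT) [_]].
rewrite /= !diracE (@mem_set _ (demand (E:=example) mu c1) tt);
  last exact: pref_rank_gt0.
rewrite minxx; have [//|mu_c1] := eqVneq (mu tt) c1.
rewrite memNset; last by move=> /= /eqP; rewrite (negbTE mu_c1).
by move=> /eqP; rewrite eqe mulr0n eq_sym oner_eq0.
Qed.

End Counterexample.

Theorem proposition6 (R : realType) :
  exists E : economy R,
    (exists mu : agent E -> auth E, Astar_outcome mu) /\
    (forall mu : agent E -> auth E, Astar_outcome mu ->
       exists nu : agent E -> auth E, is_matching nu /\ total_value mu < total_value nu).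
Proof.
exists (example R); split; first by exists (fun _ => c1); exact: Astar_outcome_const_c1.
move=> mu /Astar_outcome_agent_c1 mu_c1; exists (fun _ => c2).
split; first exact: is_matching_example.
rewrite !total_value_example mu_c1 eqxx /= /scaled_sqrt /weight /=.
by rewrite sqrtr0 sqrtr1 !mulr0 !mulr1 add0r addr0 ltr1n.
Qed.
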